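(* Let $\mathbb{K}$ be a field and $f=a_0(x)+a_1(x)y+\cdots+a_n(x)y^n\in\mathbb{K}[x,y]$ with $n\geq 2$, $a_1,\ldots,a_{n-1}\in\mathbb{K}[x]$, $a_0,a_n\in\mathbb{K}$, $a_0a_n\neq 0$, and suppose there exists an index $j$ with $1\leq j\leq n-1$ such that $\deg a_j>\max_{i\neq j}\deg a_i$. Then $f$ is a product of at most $\min\{j,n-j\}$ irreducible polynomials over $\mathbb{K}[x]$. In particular, if $j=1$ or $j=n-1$, then $f$ is irreducible over $\mathbb{K}[x]$.
   Context: $f$ is regarded as a polynomial in $y$ with coefficients in $\mathbb{K}[x]$; ''a product of at most $k$ irreducible polynomials over $\mathbb{K}[x]$'' means that in the factorization of $f$ into irreducible elements of $\mathbb{K}[x][y]$ the number of factors, counted with multiplicities, is at most $k$. *)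

From HB Require Import structures.
From mathcomp Require Import all_boot all_order all_algebra.
Set Implicit Arguments. Unset Strict Implicit. Unset Printing Implicit Defensive.
Import GRing.Theory.
Local Open Scope ring_scope.

Definition irreducible_elt (R : comUnitRingType) (p : R) : Prop :=
  [/\ p != 0, p \isn't a GRing.unit &
      forall a b : R, p = a * b -> a \is a GRing.unit \/ b \is a GRing.unit].

From HB Require Import structures.
From mathcomp Require Import all_boot all_order all_algebra.
From mathcomp Require Import zify.
From Stdlib Require Import Classical.
Set Implicit Arguments. Unset Strict Implicit. Unset Printing Implicit Defensive.
Import GRing.Theory.
Local Open Scope ring_scope.

(* Collect the coefficients of f of maximal x-degree into a polynomial in y:
   this leading form is multiplicative, and the hypothesis on a_j says that it
   is a monomial c y^j.  A factor of a monomial of K[y] is again a monomial, so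
   every factor of f has a dominant coefficient, and the dominant indices add
   up along a factorization, as do the y-degrees.  Factors of f also have
   nonzero constant coefficients at both ends, which puts the dominant index i
   of a non-unit strictly between 0 and its y-degree d.  Hence a factorization
   of f into non-units has at most min(j, n - j) factors, since each of them
   contributes at least 1 to both i and d - i. *)

Lemma irreducible_eltVfactor (R : comUnitRingType) (p : R) :
  p != 0 -> p \isn't a GRing.unit ->
  irreducible_elt p \/
  exists a b, [/\ p = a * b, a \isn't a GRing.unit & b \isn't a GRing.unit].
Proof.
move=> p0 pNU; have [|noF] := classic (exists a b,
  [/\ p = a * b, a \isn't a GRing.unit & b \isn't a GRing.unit]); first by right.
left; split=> // a b pE; apply: NNPP => /not_or_and[/negP aNU /negP bNU].
by apply: noF; exists a, b.
Qed.

Section MonomialFactors.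

Variable K : fieldType.
Implicit Types p q : {poly K}.

Lemma factor_Xn_mup0 p : p != 0 -> exists2 r, ~~ root r 0 & p = r * 'X^(mup 0 p).
Proof.
move=> p0; have := leqnn (mup 0 p); rewrite mup_geq // polyC0 subr0.
case/dvdpP=> r pE; exists r => //; apply/negP => /factor_theorem[r' rE].
have := leqnn (mup 0 p); rewrite mup_leq // [X in _ %| X]pE rE polyC0 subr0.
by rewrite -mulrA -exprS dvdp_mull.
Qed.

Lemma mul_eq_monomial p q c k : c != 0 -> p * q = c *: 'X^k ->
  exists i j, [/\ p = p`_i *: 'X^i, q = q`_j *: 'X^j & k = (i + j)%N].
Proof.
move=> c0 pqE; have [p0 q0] : p != 0 /\ q != 0.
  apply/andP; rewrite -negb_or -mulf_eq0 pqE scaler_eq0 negb_or c0.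
  by rewrite monic_neq0 ?monicXn.
have [r r0 pE] := factor_Xn_mup0 p0; have [s s0 qE] := factor_Xn_mup0 q0.
set a := mup 0 p in pE; set b := mup 0 q in qE.
have rsE : p * q = r * s * 'X^(a + b) by rewrite pE qE exprD mulrACA.
have kE : k = (a + b)%N.
  have := congr1 (fun u : {poly K} => u`_(a + b)) pqE.
  rewrite /= rsE coefMXn ltnn subnn coef0M coefZ coefXn.
  case: eqP => [//|_]; rewrite mulr0 => /eqP.
  by rewrite mulf_eq0 -!horner_coef0 => /orP[/(negP r0) | /(negP s0)].
have rsC : r * s = c%:P.
  apply: (@mulIf _ 'X^k); first by rewrite monic_neq0 ?monicXn.
  by rewrite kE -rsE pqE kE mul_polyC.
have /andP[r1 s1] : (size r == 1%N) && (size s == 1%N).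
  by rewrite -size_mul_eq1 rsC size_polyC c0.
have monoE (t : {poly K}) m : size t == 1%N -> t * 'X^m = (t * 'X^m)`_m *: 'X^m.
  by move=> /eqP t1; rewrite coefMXn ltnn subnn {1}[t]size1_polyC ?t1 // mul_polyC.
by exists a, b; split => //; [rewrite pE | rewrite qE]; apply: monoE.
Qed.

End MonomialFactors.

Section DominantCoef.

Variable R : idomainType.
Implicit Types u v : {poly {poly R}}.

(* In polyXY the inner variable is 'Y, i.e. the x of the statement, so this is
   the leading coefficient in x: a polynomial in y. *)
Definition lead_coefY u := lead_coef (swapXY u).

Lemma lead_coefYM u v : lead_coefY (u * v) = lead_coefY u * lead_coefY v.
Proof. by rewrite /lead_coefY rmorphM lead_coefM. Qed.

Lemma coef_lead_coefY u i : (lead_coefY u)`_i = u`_i`_(sizeY u).-1.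
Proof. by rewrite /lead_coefY lead_coefE -sizeYE coef_swapXY. Qed.

Lemma lead_coefY_eq0 u : (lead_coefY u == 0) = (u == 0).
Proof. by rewrite lead_coef_eq0 swapXY_eq0. Qed.

Definition dominant_coef u (k : nat) :=
  forall i : nat, i != k -> (size (u`_i)%R < size (u`_k)%R)%N.

Lemma coef_lead_coefY_neq0 u i :
  u != 0 -> ((lead_coefY u)`_i != 0) = (size u`_i == sizeY u).
Proof.
move=> u0; have D0 : (0 < sizeY u)%N by rewrite lt0n sizeY_eq0.
rewrite coef_lead_coefY eqn_leq max_size_coefXY /=.
apply/idP/idP => [nz | le_D]; last first.
  have szE : size u`_i = sizeY u by apply/eqP; rewrite eqn_leq le_D max_size_coefXY.
  by rewrite -szE -lead_coefE lead_coef_eq0 -size_poly_gt0 szE.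
apply: contraR nz; rewrite -ltnNge => lt_D.
by rewrite nth_default // -ltnS prednK.
Qed.

Lemma dominant_coefE u k : u != 0 ->
  dominant_coef u k <-> lead_coefY u = (lead_coefY u)`_k *: 'X^k.
Proof.
move=> u0; set p := lead_coefY u.
have p0 : p != 0 by rewrite lead_coefY_eq0.
have nzE i := coef_lead_coefY_neq0 i u0.
split=> [dom | pE i ne_ik].
  have top_k : size u`_k = sizeY u.
    have /eqP top_i0 : size u`_(size p).-1 == sizeY u.
      by rewrite -nzE -lead_coefE lead_coef_eq0.
    case: (eqVneq (size p).-1 k) => [<- // | ne].
    by have := max_size_coefXY u k; rewrite leqNgt -top_i0 dom.
  apply/polyP => i; rewrite coefZ coefXn; case: eqVneq => [-> | ne].
    by rewrite mulr1.
  by apply/eqP; rewrite mulr0 -[_ == 0]negbK nzE -top_k ltn_eqF ?dom.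
have : p`_k != 0 by apply: contraNneq p0 => pk0; rewrite pE pk0 scale0r.
rewrite nzE => /eqP->.
have : p`_i == 0 by rewrite pE coefZ coefXn (negPf ne_ik) mulr0.
by rewrite -[_ == 0]negbK nzE ltn_neqAle max_size_coefXY andbT.
Qed.

Definition const_ends u := size u`_0 = 1%N /\ size (lead_coef u) = 1%N.

Lemma const_ends_neq0 u : const_ends u -> u != 0.
Proof. by case=> u0 _; apply/eqP => u_0; move: u0; rewrite u_0 coef0 size_poly0. Qed.

Lemma const_endsM u v : const_ends (u * v) -> const_ends u /\ const_ends v.
Proof.
rewrite /const_ends coef0M lead_coefM => -[/eqP + /eqP].
by rewrite !size_mul_eq1 => /andP[/eqP-> /eqP->] /andP[/eqP-> /eqP->].
Qed.

Lemma dominant_coef_inner u k : const_ends u -> dominant_coef u k ->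
  (1 < size u)%N -> (0 < k < (size u).-1)%N.
Proof.
rewrite /const_ends lead_coefE => -[end0 endm] dom u1.
have big_k : (1 < size (u`_k)%R)%N.
  have [k0 | /dom] := eqVneq 0%N k; last by rewrite end0.
  have m0 : (size u).-1 != 0%N by rewrite -lt0n -ltnS prednK // ltnW.
  by subst k; have := dom _ m0; rewrite endm.
have neq_k i : size u`_i = 1%N -> i != k.
  by move=> ui1; apply: contraTneq big_k => <-; rewrite ui1.
have lt_k : (k < size u)%N.
  by rewrite ltnNge; apply: contraTN big_k => /(nth_default 0) ->; rewrite size_poly0.
by have := neq_k _ end0; have := neq_k _ endm; lia.
Qed.

End DominantCoef.

Section Factorization.

Variable K : fieldType.
Implicit Types u v : {poly {poly K}}.

Lemma const_ends_unit u : const_ends u -> (u \is a GRing.unit) = (size u == 1%N).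
Proof.
move=> [u0 _]; have : lead_coef u`_0 != 0 by rewrite lead_coef_eq0 -size_poly_gt0 u0.
rewrite lead_coefE u0 poly_unitE [_ \is a _]poly_unitE u0 unitfE /= => ->.
by rewrite andbT.
Qed.

Lemma const_ends_size_gt1 u : const_ends u -> u \isn't a GRing.unit -> (1 < size u)%N.
Proof.
move=> ends; rewrite const_ends_unit // ltn_neqAle eq_sym => ->.
by rewrite size_poly_gt0 const_ends_neq0.
Qed.

Lemma dominant_coefM u v k : u != 0 -> v != 0 -> dominant_coef (u * v) k ->
  exists i j, [/\ dominant_coef u i, dominant_coef v j & k = (i + j)%N].
Proof.
move=> u0 v0; rewrite dominant_coefE ?mulf_neq0 // lead_coefYM => uvE.
have c0 : (lead_coefY u * lead_coefY v)`_k != 0.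
  have : lead_coefY u * lead_coefY v != 0 by rewrite mulf_neq0 ?lead_coefY_eq0.
  by apply: contraNneq => c0; rewrite uvE c0 scale0r.
have [i [j [uE vE ->]]] := mul_eq_monomial c0 uvE.
by exists i, j; split=> //; [apply/(dominant_coefE _ u0) | apply/(dominant_coefE _ v0)].
Qed.

Lemma dominant_coef_factor u k :
  const_ends u -> dominant_coef u k -> u \isn't a GRing.unit ->
  exists s : seq {poly {poly K}},
    [/\ forall p, p \in s -> irreducible_elt p,
        (size s <= minn k ((size u).-1 - k))%N &
        u = \prod_(p <- s) p].
Proof.
have [m] := ubnP (size u); elim: m u k => // m IH u k lt_um ends dom uNU.
have u1 := const_ends_size_gt1 ends uNU.
have /andP[k0 k_lt] := dominant_coef_inner ends dom u1.
have [irr | [a [b [uE aNU bNU]]]] := irreducible_eltVfactor (const_ends_neq0 ends) uNU.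
  exists [:: u]; split=> [p /[1!inE]/eqP-> // | | ]; last by rewrite big_seq1.
  by rewrite leq_min k0 subn_gt0.
rewrite uE in ends dom; have [endsa endsb] := const_endsM ends.
have [a0 b0] := (const_ends_neq0 endsa, const_ends_neq0 endsb).
have [i [j [doma domb kE]]] := dominant_coefM a0 b0 dom.
have a1 := const_ends_size_gt1 endsa aNU; have b1 := const_ends_size_gt1 endsb bNU.
have /andP[_ i_lt] := dominant_coef_inner endsa doma a1.
have /andP[_ j_lt] := dominant_coef_inner endsb domb b1.
have szu : size u = (size a + size b).-1 by rewrite uE size_mul.
(* [set] merges occurrences of [size a] elaborated through different canonical
   instances, which [lia] would otherwise treat as distinct atoms. *)
have [lt_am lt_bm] : (size a < m)%N /\ (size b < m)%N.
  by set na := size a in szu a1 *; set nb := size b in szu b1 *; lia.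
have [sa [irra sza aE]] := IH a i lt_am endsa doma aNU.
have [sb [irrb szb bE]] := IH b j lt_bm endsb domb bNU.
exists (sa ++ sb); rewrite big_cat size_cat -aE -bE; split=> //.
  by move=> p; rewrite mem_cat => /orP[/irra | /irrb].
by set na := size a in szu sza i_lt *; set nb := size b in szu szb j_lt *; lia.
Qed.

End Factorization.

Theorem theorem6 (K : fieldType) (f : {poly {poly K}}) (n j : nat) :
  (2 <= n)%N ->
  size f = n.+1 ->
  size (f`_0) = 1%N ->
  size (f`_n) = 1%N ->
  (0 < j < n)%N ->
  (forall i : nat, (i <= n)%N -> i != j -> (size (f`_i)%R < size (f`_j)%R)%N) ->
  exists s : seq {poly {poly K}},
    [/\ forall p, p \in s -> irreducible_elt p,
        (size s <= minn j (n - j))%N &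
        f = \prod_(p <- s) p].
Proof.
move=> n2 Sf S0 Sn /andP[j0 _] dom.
have ends : const_ends f by split; rewrite // lead_coefE Sf.
have fNU : f \isn't a GRing.unit.
  by rewrite const_ends_unit // Sf gtn_eqF // ltnS ltnW.
have domf : dominant_coef f j.
  move=> i ne_ij; have [le_in | lt_ni] := leqP i n; first exact: dom.
  rewrite nth_default ?Sf // size_poly0.
  by apply: leq_ltn_trans (dom 0%N isT _); rewrite // eq_sym -lt0n.
by have := dominant_coef_factor ends domf fNU; rewrite Sf.
Qed.
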